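(* There exists a human–algorithm system (as defined in the context) with $N=2$ regimes in which the unaided human and the algorithm have correlated losses, namely $h_1>h_2$ and $a_1>a_2$ (both have higher loss in regime 1), and which nevertheless exhibits complementarity.
   Context: A human–algorithm system consists of: an integer $N\ge1$ (number of regimes); probabilities $p_1,\dots,p_N\ge 0$ with $\sum_i p_i=1$; algorithmic losses $a_1,\dots,a_N\ge 0$ and unaided-human losses $h_1,\dots,h_N\ge0$; and a combining function $c:[0,\infty)^2\to\mathbb{R}$ satisfying $\min(a,h)\le c(a,h)\le\max(a,h)$ for all $a,h\ge0$, where $c(a_i,h_i)$ is the loss of the combined system in regime $i$. Write $A=\sum_i p_i a_i$ and $H=\sum_i p_i h_i$. The system exhibits complementarity if $\sum_{i=1}^N p_i\,c(a_i,h_i)<\min(A,H)$. *)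

From Stdlib Require Import Reals Lra.
Open Scope R_scope.

(* Regimes are indexed 1..N.  sum_regimes N f = f 1 + ... + f N. *)
Fixpoint sum_regimes (N : nat) (f : nat -> R) : R :=
  match N with
  | O => 0
  | S n => sum_regimes n f + f (S n)
  end.

Record HASystem := {
  nreg : nat;
  p : nat -> R;   (* regime probabilities *)
  a : nat -> R;   (* algorithmic losses *)
  h : nat -> R;   (* unaided-human losses *)
  c : R -> R -> R
}.

Definition valid_system (S : HASystem) : Prop :=
  (1 <= nreg S)%nat /\
  (forall i, (1 <= i <= nreg S)%nat -> 0 <= p S i) /\
  sum_regimes (nreg S) (p S) = 1 /\
  (forall i, (1 <= i <= nreg S)%nat -> 0 <= a S i /\ 0 <= h S i) /\
  (forall x y, 0 <= x -> 0 <= y -> Rmin x y <= c S x y <= Rmax x y).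

Definition alg_loss (S : HASystem) : R :=
  sum_regimes (nreg S) (fun i => p S i * a S i).
Definition human_loss (S : HASystem) : R :=
  sum_regimes (nreg S) (fun i => p S i * h S i).
Definition combined_loss (S : HASystem) : R :=
  sum_regimes (nreg S) (fun i => p S i * c S (a S i) (h S i)).

Definition complementarity (S : HASystem) : Prop :=
  combined_loss S < Rmin (alg_loss S) (human_loss S).

(* Combining with [min] lets the system use, in each regime, whichever agent
   is better there.  Its loss therefore drops strictly below the algorithm's
   as soon as the human is strictly better on some regime of positive
   probability, and strictly below the human's as soon as the algorithm is
   strictly better on another.  Correlation of the losses across regimes is
   irrelevant: with two equally likely regimes, a = (3, 0) and h = (2, 1) both
   decrease from regime 1 to regime 2, yet the human wins regime 1 and the
   algorithm wins regime 2, so the combined loss 1 beats A = H = 3/2. *)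
From Stdlib Require Import Reals Lra Lia.
Open Scope R_scope.

Lemma sum_regimes_le (N : nat) (f g : nat -> R) :
  (forall i, (1 <= i <= N)%nat -> f i <= g i) ->
  sum_regimes N f <= sum_regimes N g.
Proof.
  induction N as [|n IHn]; intros Hfg; simpl.
  - lra.
  - apply Rplus_le_compat.
    + apply IHn; intros i Hi; apply Hfg; lia.
    + apply Hfg; lia.
Qed.

Lemma sum_regimes_lt (N : nat) (f g : nat -> R) (j : nat) :
  (forall i, (1 <= i <= N)%nat -> f i <= g i) ->
  (1 <= j <= N)%nat -> f j < g j ->
  sum_regimes N f < sum_regimes N g.
Proof.
  induction N as [|n IHn]; intros Hfg Hj Hlt; [lia|]; simpl.
  destruct (Nat.eq_dec j (S n)) as [-> | Hjn].
  - apply Rplus_le_lt_compat; [|exact Hlt].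
    apply sum_regimes_le; intros i Hi; apply Hfg; lia.
  - apply Rplus_lt_le_compat.
    + apply IHn; [intros i Hi; apply Hfg; lia | lia | exact Hlt].
    + apply Hfg; lia.
Qed.

Lemma Rmin_between_min_max (x y : R) : Rmin x y <= Rmin x y <= Rmax x y.
Proof. split; [apply Rle_refl | apply Rminmax]. Qed.

Section MinCombination.

Variable S : HASystem.
Hypothesis c_min : forall x y, c S x y = Rmin x y.
Hypothesis p_ge0 : forall i, (1 <= i <= nreg S)%nat -> 0 <= p S i.

Lemma min_combined_loss_lt_alg_loss (i : nat) :
  (1 <= i <= nreg S)%nat -> 0 < p S i -> h S i < a S i ->
  combined_loss S < alg_loss S.
Proof.
  intros Hi Hp Hha; unfold combined_loss, alg_loss.
  apply sum_regimes_lt with i; [intros k Hk | exact Hi |]; rewrite c_min.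
  - apply Rmult_le_compat_l; [exact (p_ge0 k Hk) | apply Rmin_l].
  - apply Rmult_lt_compat_l; [exact Hp|].
    apply Rle_lt_trans with (h S i); [apply Rmin_r | exact Hha].
Qed.

Lemma min_combined_loss_lt_human_loss (j : nat) :
  (1 <= j <= nreg S)%nat -> 0 < p S j -> a S j < h S j ->
  combined_loss S < human_loss S.
Proof.
  intros Hj Hp Hah; unfold combined_loss, human_loss.
  apply sum_regimes_lt with j; [intros k Hk | exact Hj |]; rewrite c_min.
  - apply Rmult_le_compat_l; [exact (p_ge0 k Hk) | apply Rmin_r].
  - apply Rmult_lt_compat_l; [exact Hp|].
    apply Rle_lt_trans with (a S j); [apply Rmin_l | exact Hah].
Qed.

Lemma min_combination_complementarity (i j : nat) :
  (1 <= i <= nreg S)%nat -> 0 < p S i -> h S i < a S i ->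
  (1 <= j <= nreg S)%nat -> 0 < p S j -> a S j < h S j ->
  complementarity S.
Proof.
  intros Hi Hpi Hhai Hj Hpj Hahj; apply Rmin_glb_lt.
  - exact (min_combined_loss_lt_alg_loss i Hi Hpi Hhai).
  - exact (min_combined_loss_lt_human_loss j Hj Hpj Hahj).
Qed.

End MinCombination.

Definition correlated_system : HASystem := {|
  nreg := 2;
  p := fun _ => / 2;
  a := fun i => match i with 1%nat => 3 | _ => 0 end;
  h := fun i => match i with 1%nat => 2 | _ => 1 end;
  c := Rmin |}.

Lemma correlated_system_valid : valid_system correlated_system.
Proof.
  unfold valid_system; simpl.
  split; [lia|].
  split; [intros; lra|].
  split; [lra|].
  split.
  - intros [|[|i]] Hi; simpl; lra.
  - intros x y _ _; apply Rmin_between_min_max.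
Qed.

Theorem lemma6 :
  exists S : HASystem,
    valid_system S /\ nreg S = 2%nat /\
    h S 1%nat > h S 2%nat /\ a S 1%nat > a S 2%nat /\
    complementarity S.
Proof.
  exists correlated_system.
  split; [exact correlated_system_valid|].
  split; [reflexivity|].
  split; [simpl; lra|].
  split; [simpl; lra|].
  apply (min_combination_complementarity correlated_system) with 1%nat 2%nat;
    simpl; intros; try reflexivity; try lia; lra.
Qed.
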